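(* Let $R_o$ be a weak consistent digital ray system with root $o=(0,0)$ in $\mathbb{Z}^2$ whose error is less than $1.5$. Suppose $v\in Q_1$ does not extend to diagonal $d$, for some integer $d>D(v)$. Then $v^\nwarrow=(v_x-1,v_y+1)$ extends to diagonal $d$ if $v^\nwarrow\in Q_1$, and $v^\searrow=(v_x+1,v_y-1)$ extends to diagonal $d$ if $v^\searrow\in Q_1$.
   Context: The grid graph on $\mathbb{Z}^2$ has edges between points at $L_1$ distance $1$. A weak consistent digital ray system (WCDR) with root $o$ assigns to each $p\in\mathbb{Z}^2$ a set $R_o(p)$ such that: (S1) $R_o(p)$ is the vertex set of a path from $o$ to $p$ in the grid graph; (S3) for every $q\in R_o(p)$, $R_o(q)\subseteq R_o(p)$; (S5) if $p_x=o_x$ (resp. $p_y=o_y$) then all points of $R_o(p)$ have $x$-coordinate $o_x$ (resp. $y$-coordinate $o_y$). Its error is $\sup_p \max_{v\in R_o(p)}\mathrm{dist}_\infty(v,\overline{op})$, with $\overline{op}$ the Euclidean segment and $\mathrm{dist}_\infty$ the $L_\infty$ distance. $Q_1=\{p\in\mathbb{Z}^2:p_x\ge0,p_y\ge0\}$, $D(p)=p_x+p_y$. A point $v$ extends to diagonal $d$ if there is $p\in Q_1$ with $D(p)=d$ and $v\in R_o(p)$. *)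

From mathcomp Require Import all_boot all_order all_algebra.
From mathcomp Require Import reals.
Set Implicit Arguments. Unset Strict Implicit. Unset Printing Implicit Defensive.
Import Order.TTheory GRing.Theory Num.Theory.
Local Open Scope ring_scope.

Definition pt := (int * int)%type.

Definition grid_adj (u v : pt) : bool :=
  (absz (u.1 - v.1) + absz (u.2 - v.2) == 1)%N.

Definition grid_path (o p : pt) (s : seq pt) : Prop :=
  exists rest : seq pt,
    [/\ s = o :: rest, path grid_adj o rest, last o rest = p & uniq s].

(* A ray system: Ro p v  means  v \in R_o(p). *)
Definition ray_system := pt -> pt -> Prop.

(* Weak consistent digital ray system with root o: axioms (S1), (S3), (S5). *)
Definition WCDR (o : pt) (Ro : ray_system) : Prop :=
  [/\ forall p : pt, exists s : seq pt,
                 grid_path o p s /\ (forall v, Ro p v <-> v \in s),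
      forall p q : pt, Ro p q -> forall v, Ro q v -> Ro p v
    & forall p : pt,
                 (p.1 = o.1 -> forall v, Ro p v -> v.1 = o.1) /\
                 (p.2 = o.2 -> forall v, Ro p v -> v.2 = o.2)].

(* dist_inf(v, segment [o,p]) <= e, where the segment is compact so the
   distance is attained at some point o + t (p - o), t in [0,1]. *)
Definition dist_seg_le (R : realType) (o p v : pt) (e : R) : Prop :=
  exists t : R, [/\ 0 <= t, t <= 1,
    `| (v.1)%:~R - ((o.1)%:~R + t * ((p.1)%:~R - (o.1)%:~R)) | <= e
  & `| (v.2)%:~R - ((o.2)%:~R + t * ((p.2)%:~R - (o.2)%:~R)) | <= e].

(* error(Ro) < c  :  sup_p max_{v in R_o(p)} dist_inf(v, op) < c. *)
Definition error_lt (R : realType) (o : pt) (Ro : ray_system) (c : R) : Prop :=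
  exists e : R, e < c /\ forall p v : pt, Ro p v -> dist_seg_le o p v e.

Definition inQ1 (p : pt) : Prop := 0 <= p.1 /\ 0 <= p.2.

Definition Dg (p : pt) : int := p.1 + p.2.

Definition extends_to (Ro : ray_system) (v : pt) (d : int) : Prop :=
  exists p : pt, [/\ inQ1 p, Dg p = d & Ro p v].

From mathcomp Require Import all_boot all_order all_algebra.
From mathcomp Require Import reals.
From mathcomp Require Import zify lra.
Set Implicit Arguments.
Unset Strict Implicit.
Unset Printing Implicit Defensive.
Import Order.TTheory GRing.Theory Num.Theory.
Local Open Scope ring_scope.

(* Write v = (a, b) and v^nw = (a - 1, b + 1), and aim at the far point
   P = d (2a - 1, 2b + 1).  The segment oP crosses the diagonal a + b at
   (a - 1/2, b + 1/2), the midpoint of v and v^nw, so with error < 3/2 the ray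
   R_o(P) crosses that diagonal at v or at v^nw; it also stays in Q1 on the
   diagonal d.  A point q of R_o(P) on the diagonal d exists by the discrete
   intermediate value theorem, and by consistency R_o(q) is contained in
   R_o(P) and crosses the diagonal D(v) too, necessarily at v or v^nw.  It
   cannot be v, since v does not extend to d, so v^nw extends to d through q.
   The case of v^se follows by reflecting everything in the line x = y. *)

Lemma path_ivt (T : eqType) (e : rel T) (f : T -> int) :
  (forall x y, e x y -> f y <= f x + 1) ->
  forall x s k, path e x s -> f x <= k <= f (last x s) ->
  exists2 u, u \in x :: s & f u = k.
Proof.
move=> f_step x s k; elim: s x => [|y s IHs] x /=.
  by move=> _ hk; exists x; rewrite ?mem_head //; lia.
move=> /andP[exy pys] hk.
have [<-|fx_neq_k] := eqVneq (f x) k; first by exists x; rewrite ?mem_head.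
have fy_le := f_step _ _ exy.
have [u us fuk] := IHs y pys ltac:(lia).
by exists u; rewrite // inE us orbT.
Qed.

Lemma Dg_grid_adj (u v : pt) : grid_adj u v -> Dg v <= Dg u + 1.
Proof. by rewrite /grid_adj /Dg => /eqP; lia. Qed.

Lemma ray_meets_diag (o : pt) (Ro : ray_system) (p : pt) (k : int) :
  WCDR o Ro -> Dg o <= k <= Dg p -> exists2 u, Ro p u & Dg u = k.
Proof.
move=> [S1 _ _]; have [_ [[rest [-> po_path <- _]] Rp_mem]] := S1 p => hk.
have [u us uk] := path_ivt Dg_grid_adj po_path hk.
by exists u; first exact/Rp_mem.
Qed.

Lemma extends_to_neighbour (o : pt) (Ro : ray_system) (v w P : pt) (d : int) :
  WCDR o Ro -> Dg o <= Dg v -> Dg v < d <= Dg P -> ~ extends_to Ro v d ->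
  (forall u, Ro P u -> Dg u = Dg v -> u = v \/ u = w) ->
  (forall u, Ro P u -> Dg u = d -> inQ1 u) ->
  extends_to Ro w d.
Proof.
move=> hW ov hd v_stuck RP_Dv RP_d; have [_ S3 _] := hW.
have [q RPq qd] := ray_meets_diag (p := P) (k := d) hW ltac:(lia).
have [u Rqu uv] :=
  ray_meets_diag (p := q) (k := Dg v) hW ltac:(rewrite qd; lia).
have [u_v|u_w] := RP_Dv u (S3 _ _ RPq _ Rqu) uv; subst u.
  by case: v_stuck; exists q; split => //; apply: RP_d.
by exists q; split => //; apply: RP_d.
Qed.

Lemma dist_seg_le_origin (R : realType) (k m n : int) (u : pt) (e : R) :
  dist_seg_le (0, 0) (k * m, k * n) u e ->
  exists s : R, `|u.1%:~R - s * m%:~R| <= e /\ `|u.2%:~R - s * n%:~R| <= e.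
Proof.
move=> [t [_ _]]; rewrite /= !mulr0z !add0r !subr0 !intrM !mulrA => h1 h2.
by exists (t * k%:~R).
Qed.

Lemma midpoint_ray_on_diag (R : realFieldType) (e s a b x y : R) :
  e < 3 / 2 -> 1 <= a -> 0 <= b -> x + y = a + b ->
  `|x - s * (2 * a - 1)| <= e -> `|y - s * (2 * b + 1)| <= e ->
  a - 2 < x < a + 1.
Proof.
move=> e_lt a_ge1 b_ge0 sum_xy /ler_normlP[hx1 hx2] /ler_normlP[hy1 hy2].
(* For x outside {a - 1, a}, the two bounds force the ray parameter [s] both
   below and above 1/2. *)
apply/andP; split; rewrite ltNge; apply/negP => hx.
- have : s < 1 / 2 by nra.
  nra.
- have : s < 1 / 2 by nra.
  nra.
Qed.

Lemma midpoint_ray_beyond_diag (R : realFieldType) (e s a b x y d : R) :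
  e < 3 / 2 -> 1 <= a -> 0 <= b -> a + b + 1 <= d -> x + y = d ->
  `|x - s * (2 * a - 1)| <= e -> `|y - s * (2 * b + 1)| <= e ->
  -1 < x /\ -1 < y.
Proof.
move=> e_lt a_ge1 b_ge0 hd sum_xy /ler_normlP[hx1 hx2] /ler_normlP[hy1 hy2].
split; rewrite ltNge; apply/negP => hx.
- have : s < 1 / 2 by nra.
  nra.
- have : s < 1 / 2 by nra.
  nra.
Qed.

Lemma near_ray_on_diag (R : realType) (e : R) (a b d : int) (u : pt) :
  e < 3 / 2 -> 1 <= a -> 0 <= b ->
  dist_seg_le (0, 0) (d * (2 * a - 1), d * (2 * b + 1)) u e ->
  Dg u = a + b -> u = (a, b) \/ u = (a - 1, b + 1).
Proof.
move=> e_lt a_ge1 b_ge0 /dist_seg_le_origin[s []].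
case: u => x y /=; rewrite /Dg /= intrB intrD !intrM => hx hy sum_xy.
have /andP[x_gt x_lt] : a - 2 < x < a + 1.
  rewrite -!(ltr_int R) intrB intrD.
  apply: midpoint_ray_on_diag e_lt _ _ _ hx hy.
  - by rewrite ler1z.
  - by rewrite ler0z.
  - by rewrite -!intrD sum_xy.
have : x = a \/ x = a - 1 by lia.
by case=> x_eq; [left | right]; congr pair; lia.
Qed.

Lemma near_ray_in_Q1 (R : realType) (e : R) (a b d : int) (u : pt) :
  e < 3 / 2 -> 1 <= a -> 0 <= b -> a + b < d ->
  dist_seg_le (0, 0) (d * (2 * a - 1), d * (2 * b + 1)) u e ->
  Dg u = d -> inQ1 u.
Proof.
move=> e_lt a_ge1 b_ge0 ab_lt_d /dist_seg_le_origin[s []].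
case: u => x y /=; rewrite /Dg /inQ1 /= intrB intrD !intrM => hx hy sum_xy.
suff: (-1 < x) && (-1 < y) by lia.
rewrite -!(ltr_int R); apply/andP.
apply: (midpoint_ray_beyond_diag (d := d%:~R) e_lt _ _ _ _ hx hy).
- by rewrite ler1z.
- by rewrite ler0z.
- by rewrite -[1]/(1%:~R : R) -!intrD ler_int; lia.
- by rewrite -intrD sum_xy.
Qed.

Lemma WCDR_extends_to_NW (R : realType) (Ro : ray_system) (a b d : int) :
  WCDR (0, 0) Ro -> error_lt (0, 0) Ro (3 / 2 : R) ->
  1 <= a -> 0 <= b -> a + b < d -> ~ extends_to Ro (a, b) d ->
  extends_to Ro (a - 1, b + 1) d.
Proof.
move=> hW [e [e_lt near]] a_ge1 b_ge0 ab_lt_d v_stuck.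
pose P : pt := (d * (2 * a - 1), d * (2 * b + 1)).
apply: (extends_to_neighbour (P := P) hW _ _ v_stuck).
- by rewrite /Dg /=; lia.
- by rewrite /Dg /=; nia.
- by move=> u /near; exact: near_ray_on_diag.
- by move=> u /near; exact: near_ray_in_Q1.
Qed.

Definition swap_xy (p : pt) : pt := (p.2, p.1).

Definition swap_rays (Ro : ray_system) : ray_system :=
  fun p v => Ro (swap_xy p) (swap_xy v).

Lemma swap_xyK : involutive swap_xy. Proof. by case. Qed.

Lemma grid_path_swap (o p : pt) (s : seq pt) :
  grid_path o p s -> grid_path (swap_xy o) (swap_xy p) (map swap_xy s).
Proof.
move=> [rest [-> op_path <- s_uniq]]; exists (map swap_xy rest); split => //.
- rewrite path_map; apply: sub_path op_path => u v.
  by rewrite /grid_adj /= addnC.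
- exact: last_map.
- by rewrite map_inj_uniq //; apply: can_inj swap_xyK.
Qed.

Lemma WCDR_swap (o : pt) (Ro : ray_system) :
  WCDR o Ro -> WCDR (swap_xy o) (swap_rays Ro).
Proof.
move=> [S1 S3 S5]; split.
- move=> p; have [s [ps_path Rp_mem]] := S1 (swap_xy p).
  exists (map swap_xy s); split.
    by rewrite -[p in grid_path _ p]swap_xyK; exact: grid_path_swap.
  by move=> v; rewrite /swap_rays Rp_mem -(mem_map (can_inj swap_xyK)) swap_xyK.
- by move=> p q Rpq v; exact: S3.
- move=> p; have [S5x S5y] := S5 (swap_xy p).
  by split=> [/S5y|/S5x] S5' v /S5'.
Qed.

Lemma error_lt_swap (R : realType) (o : pt) (Ro : ray_system) (c : R) :
  error_lt o Ro c -> error_lt (swap_xy o) (swap_rays Ro) c.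
Proof.
move=> [e [e_lt near]]; exists e; split=> // p v /near[t [? ? ? ?]].
by exists t.
Qed.

Lemma extends_to_swap (Ro : ray_system) (v : pt) (d : int) :
  extends_to (swap_rays Ro) v d -> extends_to Ro (swap_xy v) d.
Proof.
move=> [p [[p1 p2] pd Rpv]]; exists (swap_xy p); split => //.
by rewrite /Dg addrC.
Qed.

Theorem lemma6 (R : realType) (Ro : ray_system) :
  WCDR (0, 0) Ro -> error_lt (0, 0) Ro (3 / 2 : R) ->
  forall (v : pt) (d : int), inQ1 v -> Dg v < d -> ~ extends_to Ro v d ->
    (inQ1 (v.1 - 1, v.2 + 1) -> extends_to Ro (v.1 - 1, v.2 + 1) d) /\
    (inQ1 (v.1 + 1, v.2 - 1) -> extends_to Ro (v.1 + 1, v.2 - 1) d).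
Proof.
move=> hW herr [a b] d [/= a_ge0 b_ge0]; rewrite /Dg /= => ab_lt_d v_stuck.
split=> -[/= a1_ge0 b1_ge0].
  by apply: WCDR_extends_to_NW hW herr _ b_ge0 ab_lt_d v_stuck; lia.
have swapped_stuck : ~ extends_to (swap_rays Ro) (b, a) d.
  by move/extends_to_swap.
apply: (extends_to_swap (v := (b - 1, a + 1))).
apply: WCDR_extends_to_NW (WCDR_swap hW) (error_lt_swap herr) _ a_ge0 _
  swapped_stuck; lia.
Qed.
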